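(* Let $d$ be a metric on $\mathbb R^n$ induced by a norm, let $\{\mathbb R^n;w_1,\dots,w_N;p_1,\dots,p_N\}$ be a hyperbolic IFS (contractions $w_i$ on $(\mathbb R^n,d)$, constant probabilities $p_i\in(0,1]$, $\sum_ip_i=1$) with attractor $A_\infty$. For $\delta>0$ let $\{\mathcal D^n(\delta);\tilde w_1,\dots,\tilde w_N;p_1,\dots,p_N\}$ be the DIFS with the same constant probabilities, where $\tilde w_i$ is the $\delta$-roundoff of $w_i$, and let $\mathcal A_{\mathcal F}(\delta)$ be the family of all positive recurrent communication classes of its associated Markov chain. Then $$\lim_{\delta\to0}\mathcal A_k^+(\delta)=A_\infty$$ in the Hausdorff metric induced by $d$, where for each $\delta$, $\mathcal A_k^+(\delta)$ is any set from $\mathcal A_{\mathcal F}(\delta)$.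
   Context: For $m\in\mathbb Z^n$, $C_\delta(m)=\prod_{j=1}^n[(m_j-\tfrac12)\delta,(m_j+\tfrac12)\delta)$; $\mathcal D^n(\delta)=\{\delta m:m\in\mathbb Z^n\}\subset\mathbb R^n$. The $\delta$-roundoff of $x$ is $\tilde x=\delta m$ where $x\in C_\delta(m)$; the $\delta$-roundoff of $w$ is $\tilde w(\tilde x)=\widetilde{w(\tilde x)}$ on $\mathcal D^n(\delta)$. The attractor of the hyperbolic IFS is the unique nonempty compact $A_\infty$ with $A_\infty=\bigcup_iw_i(A_\infty)$. The associated Markov chain of the DIFS has transition probabilities $P(\tilde x,\tilde y)=\sum_ip_i\mathbf 1_{\{\tilde y\}}(\tilde w_i(\tilde x))$ on $\mathcal D^n(\delta)$. Accessibility: $P^k(\tilde x,\tilde y)>0$ for some $k\ge1$; a communication class is a maximal nonempty set of mutually accessible states; a state is positive recurrent if the chain started there returns a.s. with finite expected return time; a positive recurrent communication class is a communication class of positive recurrent states. *)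

From HB Require Import structures.
From mathcomp Require Import all_boot all_order all_algebra.
From mathcomp Require Import all_classical all_reals all_analysis.
Set Implicit Arguments. Unset Strict Implicit. Unset Printing Implicit Defensive.
Import Order.TTheory GRing.Theory Num.Theory.
Local Open Scope classical_set_scope.
Local Open Scope ring_scope.

Section IFSDefs.
Variables (R : realType) (n N : nat).
Local Notation V := 'rV[R]_n.

Definition is_norm (nrm : V -> R) : Prop :=
  [/\ forall x, 0 <= nrm x,
      forall x, nrm x = 0 -> x = 0,
      forall (a : R) x, nrm (a *: x) = `|a| * nrm x
    & forall x y, nrm (x + y) <= nrm x + nrm y].

Definition ndist (nrm : V -> R) (x y : V) : R := nrm (x - y).

Definition ifs_contraction (nrm : V -> R) (f : V -> V) : Prop :=
  exists2 s : R, (0 <= s) && (s < 1) &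
    forall x y, ndist nrm (f x) (f y) <= s * ndist nrm x y.

Definition dopen (nrm : V -> R) (U : set V) : Prop :=
  forall x, U x -> exists2 r : R, 0 < r & [set y | ndist nrm x y < r] `<=` U.

Definition dcompact (nrm : V -> R) (A : set V) : Prop :=
  forall F : set (set V), (forall U, F U -> dopen nrm U) ->
    A `<=` \bigcup_(U in F) U ->
    exists s : seq (set V), (forall U, U \in s -> F U) /\
      A `<=` \bigcup_(U in [set U | U \in s]) U.

Definition is_attractor (nrm : V -> R) (w : 'I_N -> V -> V) (A : set V) : Prop :=
  [/\ A !=set0, dcompact nrm A & A = \bigcup_(i in [set: 'I_N]) (w i @` A)].

Definition roundoff (delta : R) (x : V) : V :=
  \row_j (delta * (Num.floor (x ord0 j / delta + 2^-1))%:~R).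

Definition lattice_pts (delta : R) : set V :=
  [set x | exists m : 'rV[int]_n, x = \row_j (delta * (m ord0 j)%:~R)].

Definition difs_maps (delta : R) (w : 'I_N -> V -> V) : 'I_N -> V -> V :=
  fun i x => roundoff delta (w i x).

(* Markov chain associated with maps f and probabilities p:
   P(x,y) = \sum_i p_i 1_{y}(f_i x).  k-step transition probability,
   computed by first-step decomposition (Chapman-Kolmogorov). *)
Fixpoint Pk (p : 'I_N -> R) (f : 'I_N -> V -> V) (k : nat) (x y : V) : R :=
  match k with
  | 0 => (x == y)%:R
  | k'.+1 => \sum_(i < N) p i * Pk p f k' (f i x) y
  end.

Definition ifs_trans (p : 'I_N -> R) (f : 'I_N -> V -> V) (x y : V) : R :=
  \sum_(i < N) p i * (f i x == y)%:R.

(* first-passage probabilities: fpt k x y = P_x(first visit to y at time k >= 1) *)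
Fixpoint fpt (p : 'I_N -> R) (f : 'I_N -> V -> V) (k : nat) (x y : V) : R :=
  match k with
  | 0 => 0
  | k'.+1 => \sum_(i < N) p i *
       (if f i x == y then (k' == 0%N)%:R else fpt p f k' (f i x) y)
  end.

Definition accessible p f (x y : V) : Prop :=
  exists2 k : nat, (0 < k)%N & 0 < Pk p f k x y.

Definition communicate p f (x y : V) : Prop :=
  accessible p f x y /\ accessible p f y x.

Definition comm_class p f (S C : set V) : Prop :=
  [/\ C `<=` S, C !=set0,
      (forall x y, C x -> C y -> communicate p f x y)
    & forall D : set V, C `<=` D -> D `<=` S ->
        (forall x y, D x -> D y -> communicate p f x y) -> D = C].

Definition pos_recurrent p f (x : V) : Prop :=
  ((\sum_(k <oo) (fpt p f k x x)%:E = 1%:E) /\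
   (\sum_(k <oo) (k%:R * fpt p f k x x)%:E < +oo))%E.

Definition pos_rec_class p f (S C : set V) : Prop :=
  comm_class p f S C /\ forall x, C x -> pos_recurrent p f x.

Definition hausdorff_dist (nrm : V -> R) (A B : set V) : \bar R :=
  maxe (ereal_sup [set ereal_inf [set (ndist nrm x y)%:E | y in B] | x in A])
       (ereal_sup [set ereal_inf [set (ndist nrm x y)%:E | x in A] | y in B]).

End IFSDefs.

From HB Require Import structures.
From mathcomp Require Import all_boot all_order all_algebra.
From mathcomp Require Import all_classical all_reals all_analysis.
From mathcomp Require Import ring lra.
Set Implicit Arguments. Unset Strict Implicit. Unset Printing Implicit Defensive.
Import Order.TTheory GRing.Theory Num.Theory.
Local Open Scope classical_set_scope.
Local Open Scope ring_scope.

(* Let s < 1 be a common contraction factor of the w_i and E = O(delta) the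
   roundoff error of one step.  Running the same word of maps through the
   rounded maps from x and through the exact maps from b keeps the two orbits
   within s^k |x - b| + E / (1 - s) of each other after k steps.
   A positive recurrent class C of the rounded chain is closed under the
   rounded maps (a step leaving C could never be undone, so the return
   probability would be at most 1 - p_i < 1), and every x in C lies on a
   cycle.  Running that cycle many times next to an orbit inside the attractor
   shows that x is close to A; pulling a point a of A back along a long word
   inside A and pushing a point of C forward along the same word shows that a
   is close to C. *)

Definition apply_word {I T : Type} (f : I -> T -> T) (s : seq I) (x : T) : T :=
  foldl (fun y i => f i y) x s.

Section Words.
Variables (I T : Type) (f : I -> T -> T).

Lemma apply_word_cat s t x :
  apply_word f (s ++ t) x = apply_word f t (apply_word f s x).
Proof. exact: foldl_cat. Qed.

Lemma apply_word_rcons s i x : apply_word f (rcons s i) x = f i (apply_word f s x).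
Proof. exact: foldl_rcons. Qed.

Lemma cycle_word_long s x : (0 < size s)%N -> apply_word f s x = x ->
  forall m, exists2 t, (m <= size t)%N & apply_word f t x = x.
Proof.
move=> s_gt0 sx; elim=> [|m [t mt tx]]; first by exists [::].
exists (t ++ s); last by rewrite apply_word_cat tx.
by rewrite size_cat -addn1 leq_add.
Qed.

End Words.

Section MarkovChain.
Variables (R : realType) (n N : nat).
Local Notation V := 'rV[R]_n.
Variables (p : 'I_N -> R) (f : 'I_N -> V -> V).
Hypothesis p_gt0 : forall i, 0 < p i.
Let p_ge0 i : 0 <= p i := ltW (p_gt0 i).

Lemma Pk_ge0 k x y : 0 <= Pk p f k x y.
Proof.
elim: k x => [|k IH] x /=; first by case: (x == y).
by apply: sumr_ge0 => i _; rewrite mulr_ge0.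
Qed.

Lemma Pk_gt0P k x y :
  0 < Pk p f k x y <-> exists2 s, size s = k & apply_word f s x = y.
Proof.
elim: k x => [|k IH] x /=.
  split; first by case: eqP => [->|]; [exists [::] | rewrite ltxx].
  by case=> -[|//] _ /= ->; rewrite eqxx ltr01.
split=> [Pk_gt0 | [[//|i s] /= [sk] sx]].
  have [i] : exists i, 0 < p i * Pk p f k (f i x) y.
    apply: contrapT => none; move: Pk_gt0; rewrite ltNge => /negP; apply.
    by apply: sumr_le0 => i _; rewrite leNgt; apply/negP => pos; apply: none; exists i.
  by rewrite pmulr_rgt0 // => /IH [s <- sx]; exists (i :: s).
have Pk_gt0 : 0 < Pk p f k (f i x) y by apply/IH; exists s.
rewrite (bigD1 i) //= ltr_pwDl ?mulr_gt0 //.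
by apply: sumr_ge0 => j _; rewrite mulr_ge0 ?Pk_ge0.
Qed.

Lemma accessibleP x y :
  accessible p f x y <-> exists2 s, (0 < size s)%N & apply_word f s x = y.
Proof.
split=> [[k k_gt0 /Pk_gt0P [s sk sx]] | [s s_gt0 sx]]; first by exists s; rewrite ?sk.
by exists (size s) => //; apply/Pk_gt0P; exists s.
Qed.

Lemma accessible_trans x y z :
  accessible p f x y -> accessible p f y z -> accessible p f x z.
Proof.
move=> /accessibleP [s s_gt0 sx] /accessibleP [t t_gt0 ty]; apply/accessibleP.
by exists (s ++ t); rewrite ?size_cat ?addn_gt0 ?s_gt0 // apply_word_cat sx.
Qed.

Lemma fpt_ge0 k z y : 0 <= fpt p f k z y.
Proof.
elim: k z => [|k IH] z //=; apply: sumr_ge0 => i _.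
by rewrite mulr_ge0 //; case: ifP.
Qed.

Hypothesis p_sum : \sum_(i < N) p i = 1.

Section Return.
Variable x : V.

Definition hit_prob K z := \sum_(k < K) fpt p f k.+1 z x.

Definition hit_prob0 K z := if z == x then 1 else hit_prob K z.

Lemma hit_probS K z : hit_prob K.+1 z = \sum_(i < N) p i * hit_prob0 K (f i z).
Proof.
rewrite /hit_prob /= exchange_big /=; apply: eq_bigr => i _.
rewrite -mulr_sumr /hit_prob0 big_ord_recl /=.
by case: (f i z == x); rewrite ?big1_eq ?addr0 ?add0r.
Qed.

Lemma hit_prob0_itv K z : 0 <= hit_prob0 K z <= 1.
Proof.
elim: K z => [|K IH] z; rewrite /hit_prob0; case: (z == x); rewrite ?ler01 ?lexx //.
  by rewrite /hit_prob big_ord0 lexx ler01.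
rewrite hit_probS -p_sum; apply/andP; split.
  by apply: sumr_ge0 => i _; rewrite mulr_ge0 ?p_ge0 //; case/andP: (IH (f i z)).
by apply: ler_sum => i _; rewrite ler_piMr ?p_ge0 //; case/andP: (IH (f i z)).
Qed.

Lemma hit_prob_unreachable K z :
  (forall s, apply_word f s z != x) -> hit_prob K z = 0.
Proof.
elim: K z => [|K IH] z z_x; first by rewrite /hit_prob big_ord0.
rewrite hit_probS big1 // => i _.
by rewrite /hit_prob0 (negbTE (z_x [:: i])) IH ?mulr0 // => s; apply: (z_x (i :: s)).
Qed.

Lemma hit_prob_escape i K :
  (forall s, apply_word f s (f i x) != x) -> hit_prob K x <= 1 - p i.
Proof.
move=> escape; have -> : 1 - p i = \sum_(j < N | j != i) p j.
  by rewrite -p_sum (bigD1 i) //= addrC addrK.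
case: K => [|K]; first by rewrite /hit_prob big_ord0 sumr_ge0.
rewrite hit_probS (bigD1 i) //= /hit_prob0 (negbTE (escape [::])) hit_prob_unreachable //.
rewrite mulr0 add0r; apply: ler_sum => j _; rewrite ler_piMr ?p_ge0 //.
by case/andP: (hit_prob0_itv K (f j x)).
Qed.

Lemma pos_recurrent_return i :
  pos_recurrent p f x -> exists s, apply_word f s (f i x) = x.
Proof.
case=> return_as _; apply: contrapT => no_return.
have escape s : apply_word f s (f i x) != x by apply/eqP => sx; apply: no_return; exists s.
suff : (\sum_(k <oo) (fpt p f k x x)%:E <= (1 - p i)%:E)%E.
  by rewrite return_as lee_fin; have := p_gt0 i; lra.
apply: lime_le; first by apply: is_cvg_nneseries => k _ _; rewrite lee_fin fpt_ge0.
apply: nearW => K; rewrite sumEFin lee_fin.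
case: K => [|K].
  by rewrite big_geq //; move: (hit_prob_escape 0 escape); rewrite /hit_prob big_ord0.
by rewrite big_mkord big_ord_recl /= add0r; apply: hit_prob_escape.
Qed.

End Return.

Lemma pos_rec_class_stable S C x i :
  pos_rec_class p f S C -> C x -> S (f i x) -> C (f i x).
Proof.
case=> -[CS _ C_comm C_max] C_rec Cx Sfx.
have [s sx] := pos_recurrent_return i (C_rec x Cx).
have x_fx : accessible p f x (f i x) by apply/accessibleP; exists [:: i].
have fx_x : accessible p f (f i x) x.
  apply/accessibleP; exists (s ++ i :: s); first by rewrite size_cat addnS.
  by rewrite apply_word_cat sx /= sx.
have comm_x y : (C `|` [set f i x]) y -> accessible p f y x /\ accessible p f x y.
  by case=> [Cy | ->]; [exact: C_comm | ].
suff <- : C `|` [set f i x] = C by right.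
apply: C_max => [y Cy | y [/CS | ->] // | y z /comm_x [yx xy] /comm_x [zx xz]].
  by left.
by split; [apply: accessible_trans yx _ | apply: accessible_trans zx _].
Qed.

Lemma pos_rec_class_cycle S C x : pos_rec_class p f S C -> C x ->
  exists2 s, (0 < size s)%N & apply_word f s x = x.
Proof. by case=> -[_ _ C_comm _] _ Cx; apply/accessibleP; case: (C_comm x x Cx Cx). Qed.

Lemma pos_rec_class_word_stable S C : pos_rec_class p f S C ->
  (forall i y, S (f i y)) -> forall s x, C x -> C (apply_word f s x).
Proof.
move=> CC fS s; elim/last_ind: s => [//|s i IH] x Cx.
by rewrite apply_word_rcons; apply: pos_rec_class_stable CC (IH x Cx) (fS _ _).
Qed.

End MarkovChain.

Section SelfSimilar.
Variables (I T : Type) (w : I -> T -> T) (A : set T).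
Hypothesis A_eq : A = \bigcup_(i in [set: I]) (w i @` A).

Lemma self_similar_word s a : A a -> A (apply_word w s a).
Proof.
elim/last_ind: s => [//|s i IH] Aa; rewrite apply_word_rcons A_eq.
by exists i => //; exists (apply_word w s a); first exact: IH.
Qed.

Lemma self_similar_preimage m a : A a ->
  exists2 s, size s = m & exists2 b, A b & apply_word w s b = a.
Proof.
elim: m a => [|m IH] a Aa; first by exists [::] => //; exists a.
move: Aa; rewrite {1}A_eq => -[i _ [a1 Aa1 <-]].
have [s sm [b Ab sb]] := IH a1 Aa1.
exists (rcons s i); first by rewrite size_rcons sm.
by exists b; rewrite ?apply_word_rcons ?sb.
Qed.

End SelfSimilar.

Lemma expr_scale_eventually_lt (R : realType) (s D e : R) : 0 <= s < 1 -> 0 < e ->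
  exists m, forall L, (m <= L)%N -> s ^+ L * D < e.
Proof.
move=> /andP[s_ge0 s_lt1] e_gt0.
have s_norm : `|s| < 1 by rewrite ger0_norm.
have sD0 : s ^+ L * D @[L --> \oo] --> 0.
  by rewrite -(mul0r D); apply: cvgMl; exact: cvg_expr.
have [m _ small] := cvgr0_norm_lt _ sD0 _ e_gt0.
by exists m => L mL; apply: le_lt_trans (ler_norm _) (small L mL).
Qed.

Lemma roundoff_coord_err (R : realType) n (delta : R) (v : 'rV[R]_n) j : 0 < delta ->
  `|roundoff delta v 0 j - v 0 j| <= delta / 2.
Proof.
move=> delta_gt0; rewrite mxE; set u := v 0 j / delta + 2^-1.
have -> : v 0 j = delta * u - delta / 2.
  by rewrite /u mulrDr mulrCA divff ?mulr1 ?gt_eqF // addrK.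
have /andP[floor_le floor_gt] := floor_itv u; rewrite intrD mulr1z in floor_gt.
have lo : delta * (Num.floor u)%:~R <= delta * u by rewrite ler_wpM2l // ltW.
have hi : delta * u < delta * (Num.floor u)%:~R + delta.
  by rewrite -[X in _ + X]mulr1 -mulrDr ltr_pM2l.
rewrite ler_norml; apply/andP; split; lra.
Qed.

Lemma roundoff_lattice (R : realType) n (delta : R) (v : 'rV[R]_n) :
  lattice_pts delta (roundoff delta v).
Proof. by exists (\row_j Num.floor (v 0 j / delta + 2^-1)); apply/rowP => j; rewrite !mxE. Qed.

Section Norm.
Variables (R : realType) (n : nat) (nrm : 'rV[R]_n -> R).
Hypothesis nrm_norm : is_norm nrm.

Lemma nrm_ge0 v : 0 <= nrm v. Proof. by case: nrm_norm. Qed.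

Lemma nrmZ a v : nrm (a *: v) = `|a| * nrm v. Proof. by case: nrm_norm. Qed.

Lemma nrm_triangle u v : nrm (u + v) <= nrm u + nrm v. Proof. by case: nrm_norm. Qed.

Lemma nrm_sub_triangle u v w : nrm (u - w) <= nrm (u - v) + nrm (v - w).
Proof. by have := nrm_triangle (u - v) (v - w); rewrite addrA subrK. Qed.

Lemma nrm_le_coord v : nrm v <= \sum_j `|v 0 j| * nrm 'e_j.
Proof.
rewrite {1}[v]row_sum_delta; elim/big_ind2: _ => [|a x b y ax yb|j _].
- by rewrite -(scale0r (0 : 'rV_n)) nrmZ normr0 mul0r.
- by apply: le_trans (nrm_triangle _ _) _; apply: lerD.
- by rewrite -nrmZ.
Qed.

Lemma roundoff_err (delta : R) v : 0 < delta ->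
  nrm (roundoff delta v - v) <= delta / 2 * \sum_j nrm 'e_j.
Proof.
move=> delta_gt0; apply: le_trans (nrm_le_coord _) _; rewrite mulr_sumr.
apply: ler_sum => j _; rewrite ler_wpM2r ?nrm_ge0 //.
by move: (roundoff_coord_err v j delta_gt0); rewrite !mxE.
Qed.

Lemma dcompact_bounded A b : dcompact nrm A ->
  exists K, forall a, A a -> nrm (b - a) <= K.
Proof.
move=> A_compact.
pose balls := [set U : set 'rV_n | exists k : nat, U = [set y | nrm (b - y) < k%:R]].
have [||s [s_balls A_cover]] := A_compact balls.
- move=> _ [k ->] x /= bx; exists (k%:R - nrm (b - x)); first by rewrite subr_gt0.
  move=> y /= xy; apply: le_lt_trans (nrm_sub_triangle _ x _) _.
  by rewrite /ndist in xy; lra.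
- move=> a _; exists [set y | nrm (b - y) < (Num.bound (nrm (b - a)))%:R].
    by exists (Num.bound (nrm (b - a))).
  exact: archi_boundP (nrm_ge0 _).
have [K sK] : exists K : nat, forall U, U \in s -> forall y, U y -> nrm (b - y) < K%:R.
  elim: s s_balls {A_cover} => [|U s IH] s_balls; first by exists 0%N.
  have [|K sK] := IH; first by move=> V sV; apply: s_balls; rewrite in_cons sV orbT.
  have [k ->] : balls U by apply: s_balls; rewrite mem_head.
  exists (maxn k K) => V; rewrite in_cons => /orP[/eqP -> y /= | /sK sV y /sV] yk.
    by apply: lt_le_trans yk _; rewrite ler_nat leq_maxl.
  by apply: lt_le_trans yk _; rewrite ler_nat leq_maxr.
exists K%:R => a Aa; have [U sU Ua] := A_cover a Aa.
exact: ltW (sK U sU a Ua).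
Qed.

Lemma contractions_common_factor N (w : 'I_N -> 'rV[R]_n -> 'rV[R]_n) :
  (forall i, ifs_contraction nrm (w i)) ->
  exists2 s, 0 <= s < 1 & forall i x y, nrm (w i x - w i y) <= s * nrm (x - y).
Proof.
move=> w_contr.
have /boolp.choice [sf sf_ok] : forall i, exists s,
    (0 <= s < 1) /\ forall x y, nrm (w i x - w i y) <= s * nrm (x - y).
  by move=> i; have [s ? ?] := w_contr i; exists s.
exists (\big[Num.max/0]_i sf i).
  by rewrite bigmax_ge_id /= bigmax_lt // => i _; case: (sf_ok i) => /andP[].
move=> i x y; apply: le_trans (proj2 (sf_ok i) x y) _.
by rewrite ler_wpM2r ?nrm_ge0 // le_bigmax.
Qed.

End Norm.

Section Shadowing.
Variables (R : realType) (n N : nat) (nrm : 'rV[R]_n -> R).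
Hypothesis nrm_norm : is_norm nrm.
Variables (w g : 'I_N -> 'rV[R]_n -> 'rV[R]_n) (s E B : R).
Hypotheses (s_itv : 0 <= s < 1) (B_ge0 : 0 <= B) (B_fix : E + s * B <= B).
Hypothesis w_lip : forall i x y, nrm (w i x - w i y) <= s * nrm (x - y).
Hypothesis g_near : forall i x, nrm (g i x - w i x) <= E.

Lemma word_shadow t x b :
  nrm (apply_word g t x - apply_word w t b) <= s ^+ size t * nrm (x - b) + B.
Proof.
have s_ge0 : 0 <= s by case/andP: s_itv.
elim/last_ind: t => [|t i IH]; first by rewrite expr0 mul1r lerDl.
rewrite !apply_word_rcons size_rcons exprS.
set X := apply_word g t x in IH *; set Y := apply_word w t b in IH *.
apply: le_trans (nrm_sub_triangle nrm_norm _ (w i X) _) _.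
have := g_near i X; have := w_lip i X Y; have := ler_wpM2l s_ge0 IH.
rewrite mulrDr mulrA; have := B_fix; lra.
Qed.

Variable A : set 'rV[R]_n.
Hypothesis A_eq : A = \bigcup_(i in [set: 'I_N]) (w i @` A).

Lemma cycle_near_attractor x t e : A !=set0 ->
  (0 < size t)%N -> apply_word g t x = x -> 0 < e ->
  exists2 a, A a & ndist nrm x a <= B + e.
Proof.
move=> [b Ab] t_gt0 tx e_gt0.
have [m small] := expr_scale_eventually_lt (nrm (x - b)) s_itv e_gt0.
have [u mu ux] := cycle_word_long t_gt0 tx m.
exists (apply_word w u b); first exact: self_similar_word.
rewrite /ndist -{1}ux; apply: le_trans (word_shadow u x b) _.
by have := small _ mu; lra.
Qed.

Lemma attractor_near_stable_set (C : set 'rV[R]_n) x0 b K e :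
  (forall a, A a -> nrm (b - a) <= K) ->
  C x0 -> (forall t x, C x -> C (apply_word g t x)) -> 0 < e ->
  forall a, A a -> exists2 x, C x & ndist nrm x a <= B + e.
Proof.
move=> A_bdd Cx0 C_stable e_gt0 a Aa.
have s_ge0 : 0 <= s by case/andP: s_itv.
have [m small] := expr_scale_eventually_lt (nrm (x0 - b) + K) s_itv e_gt0.
have [t tm [a' Aa' ta]] := self_similar_preimage A_eq m Aa.
exists (apply_word g t x0); first exact: C_stable.
rewrite /ndist -ta; apply: le_trans (word_shadow t x0 a') _.
have x0a' : nrm (x0 - a') <= nrm (x0 - b) + K.
  by apply: le_trans (nrm_sub_triangle nrm_norm _ b _) _; rewrite lerD2l A_bdd.
have := ler_wpM2l (exprn_ge0 (size t) s_ge0) x0a'.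
have := small (size t); rewrite tm leqnn => /(_ isT).
lra.
Qed.

End Shadowing.

Lemma hausdorff_dist_le (R : realType) n (nrm : 'rV[R]_n -> R)
    (C A : set 'rV[R]_n) r :
  (forall x, C x -> exists2 a, A a & ndist nrm x a <= r) ->
  (forall a, A a -> exists2 x, C x & ndist nrm x a <= r) ->
  (hausdorff_dist nrm C A <= r%:E)%E.
Proof.
move=> C_near A_near; rewrite /hausdorff_dist ge_max.
apply/andP; split; apply: ge_ereal_sup => _ [z Az <-].
- have [a Aa za] := C_near z Az.
  apply: (le_trans (y := (ndist nrm z a)%:E)); last by rewrite lee_fin.
  by apply: ereal_inf_lbound; exists a.
- have [x Cx xz] := A_near z Az.
  apply: (le_trans (y := (ndist nrm x z)%:E)); last by rewrite lee_fin.
  by apply: ereal_inf_lbound; exists x.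
Qed.

Theorem corollary8 (R : realType) (n N : nat) (nrm : 'rV[R]_n -> R)
    (w : 'I_N -> 'rV[R]_n -> 'rV[R]_n) (p : 'I_N -> R) (A : set 'rV[R]_n) :
  is_norm nrm ->
  (forall i, ifs_contraction nrm (w i)) ->
  (forall i, 0 < p i <= 1) ->
  \sum_(i < N) p i = 1 ->
  is_attractor nrm w A ->
  forall eps : R, 0 < eps ->
  exists2 delta0 : R, 0 < delta0 &
    forall delta : R, 0 < delta < delta0 ->
    forall C : set 'rV[R]_n,
      pos_rec_class p (difs_maps delta w) (lattice_pts delta) C ->
      (hausdorff_dist nrm C A < eps%:E)%E.
Proof.
move=> nrm_norm w_contr p_itv p_sum [A_ne A_compact A_eq] eps eps_gt0.
have [s s_itv w_lip] := contractions_common_factor nrm_norm w_contr.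
have [b _] := A_ne; have [K A_bdd] := dcompact_bounded nrm_norm b A_compact.
set c := \sum_(j < n) nrm 'e_j.
have c_ge0 : 0 <= c by apply: sumr_ge0 => j _; apply: nrm_ge0.
have [s_ge0 s_lt1] := andP s_itv.
(* [delta0] makes the roundoff error [delta / 2 * c] of a single step small
   enough for [eps / 4] to bound the accumulated error of any word. *)
exists ((1 - s) * (eps / 4) / (c + 1)) => [|delta /andP[delta_gt0 delta_lt] C C_class].
  by rewrite divr_gt0 ?mulr_gt0 //; lra.
have E_fix : delta / 2 * c + s * (eps / 4) <= eps / 4.
  rewrite ltr_pdivlMr in delta_lt; last by lra.
  have := mulr_ge0 (ltW delta_gt0) c_ge0; lra.
have g_near i x : nrm (difs_maps delta w i x - w i x) <= delta / 2 * c.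
  exact: roundoff_err.
have p_gt0 i : 0 < p i by case/andP: (p_itv i).
have C_stable := pos_rec_class_word_stable p_gt0 p_sum C_class
  (fun i y => roundoff_lattice delta _).
have [_ [x0 Cx0] _ _] := C_class.1.
have e4 : 0 < eps / 4 by lra.
apply: le_lt_trans (hausdorff_dist_le (r := eps / 4 + eps / 4) _ _) _.
- move=> x /(pos_rec_class_cycle p_gt0 C_class) [t t_gt0 tx].
  exact: (cycle_near_attractor nrm_norm s_itv (ltW e4) E_fix w_lip g_near
    A_eq A_ne t_gt0 tx e4).
- exact: (attractor_near_stable_set nrm_norm s_itv (ltW e4) E_fix w_lip g_near
    A_eq A_bdd Cx0 C_stable e4).
by rewrite lte_fin; lra.
Qed.
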